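(* Let $\mathcal P$ be a finite collection of prototiles. If the tiling system $\sigma:T(\mathcal P)\to T(\mathcal P)$ has a point of period $2$ (a point $x$ with $\sigma^2x=x\ne\sigma x$), then it has at least two fixed points.
   Context: A prototile is a finite nonempty subset of $\mathbb Z$ with minimum $0$. For a finite collection $\mathcal P=\{P_1,\dots,P_K\}$ of prototiles, a tiling of $\mathbb Z$ by $\mathcal P$ is an expression $\mathbb Z=\bigcup_j(t_j+P_{k_j})$ as a disjoint union of translates of prototiles; it corresponds to the point $x\in\{1,\dots,K\}^{\mathbb Z}$ with $x_i=k$ iff $i\in t_j+P_{k_j}$ for some $j$ with $k_j=k$. $T(\mathcal P)$ is the set of all such points and $\sigma$ is the shift $(\sigma x)_i=x_{i+1}$; $\sigma:T(\mathcal P)\to T(\mathcal P)$ is called a tiling system. *)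

From mathcomp Require Import all_boot all_order all_algebra.
Set Implicit Arguments. Unset Strict Implicit. Unset Printing Implicit Defensive.
Import Order.TTheory GRing.Theory Num.Theory.
Local Open Scope ring_scope.

(* A prototile: a finite nonempty subset of Z with minimum 0,
   represented by a (finite) sequence of integers. *)
Definition prototile (A : seq int) : Prop :=
  (0 \in A) /\ (forall p, p \in A -> 0 <= p).

(* A collection of K prototiles indexed by 'I_K (index k stands for the
   paper's k+1). *)
Definition prototile_collection (K : nat) (P : 'I_K -> seq int) : Prop :=
  forall k, prototile (P k).

(* A family of labelled tiles J (pairs (t,k) meaning the translate t + P_k)
   is a tiling of Z when every integer lies in exactly one tile of J. *)
Definition is_tiling (K : nat) (P : 'I_K -> seq int) (J : int * 'I_K -> Prop) : Prop :=
  forall i : int, exists! tk : int * 'I_K, J tk /\ (i - tk.1) \in P tk.2.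

Definition tiling_point (K : nat) (P : 'I_K -> seq int) (J : int * 'I_K -> Prop)
  (x : int -> 'I_K) : Prop :=
  forall (i : int) (k : 'I_K), x i = k <-> exists t : int, J (t, k) /\ (i - t) \in P k.

Definition TP (K : nat) (P : 'I_K -> seq int) (x : int -> 'I_K) : Prop :=
  exists J, is_tiling P J /\ tiling_point P J x.

Definition shift (K : nat) (x : int -> 'I_K) : int -> 'I_K := fun i => x (i + 1).

(* A point of period 2 alternates between two distinct labels a and b, so the
   positions labelled a form one parity class and those labelled b the other.
   The tiles of type a of the underlying tiling cover exactly the a-positions;
   together with their translates by 1 they tile Z using P_a alone, and that
   tiling is the fixed point with constant label a.  The same works for b. *)

From mathcomp Require Import all_boot all_order all_algebra.
From Stdlib Require Import FunctionalExtensionality.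
Set Implicit Arguments. Unset Strict Implicit. Unset Printing Implicit Defensive.
Import GRing.Theory.
Local Open Scope ring_scope.

Lemma int_shift_invariant (Q : int -> Prop) :
  Q 0 -> (forall i, Q i <-> Q (i + 1)) -> forall i, Q i.
Proof.
move=> Q0 QS; elim/int_ind => [//|n Qn|n Qn].
  by rewrite intS addrC; apply/(QS n).
by apply/(QS _); rewrite intS opprD addrAC addNr add0r.
Qed.

Section PeriodTwo.

Variables (T : eqType) (x : int -> T).
Hypothesis x_period2 : forall i, x (i + 2) = x i.

Let xSS i : x (i + 1 + 1) = x i.
Proof. by rewrite -addrA x_period2. Qed.

Lemma period2_fixed : x 1 = x 0 -> forall i, x (i + 1) = x i.
Proof.
move=> x10; apply: int_shift_invariant => [|i]; first by rewrite add0r.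
by rewrite xSS; split=> ->.
Qed.

Lemma period2_alternating (c : T) :
  (x 0 == c) != (x 1 == c) -> forall i, (x i == c) != (x (i + 1) == c).
Proof.
move=> alt0; apply: int_shift_invariant => [|i]; first by rewrite add0r.
by rewrite xSS eq_sym.
Qed.

End PeriodTwo.

Section ConstantTiling.

Variables (K : nat) (P : 'I_K -> seq int) (J : int * 'I_K -> Prop).
Variables (x : int -> 'I_K) (c : 'I_K).
Hypotheses (tilingJ : is_tiling P J) (x_of_J : tiling_point P J x).
Hypothesis x_alternating : forall i, (x i == c) != (x (i + 1) == c).

Definition tiles_and_left_translates : int * 'I_K -> Prop :=
  fun tk => tk.2 = c /\ (J (tk.1, c) \/ J (tk.1 + 1, c)).

Let tile_uniq i t s :
  J (t, c) -> i - t \in P c -> J (s, c) -> i - s \in P c -> t = s.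
Proof.
move=> Jt Pit Js Pis; have [tk [_ tk_uniq]] := tilingJ i.
by have [] := etrans (esym (tk_uniq _ (conj Jt Pit))) (tk_uniq _ (conj Js Pis)).
Qed.

Let label_of_tile i t : J (t, c) -> i - t \in P c -> x i = c.
Proof. by move=> Jt Pit; apply/x_of_J; exists t. Qed.

Let label_of_left_translate i t : J (t + 1, c) -> i - t \in P c -> x (i + 1) = c.
Proof.
by move=> Jt Pit; apply: (label_of_tile Jt); rewrite opprD addrACA subrr addr0.
Qed.

Lemma tiles_and_left_translates_cover i :
  exists t, tiles_and_left_translates (t, c) /\ i - t \in P c.
Proof.
have /orP[/eqP xi | /eqP xi1] : (x i == c) || (x (i + 1) == c).
  by move: (x_alternating i); case: (x i == c); case: (x (i + 1) == c).
- have [t [Jt Pit]] := proj1 (x_of_J i c) xi.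
  by exists t; split=> //; split=> //; left.
- have [t [Jt Pit]] := proj1 (x_of_J (i + 1) c) xi1.
  exists (t - 1); split; first by split=> //; right; rewrite subrK.
  by rewrite opprB addrA.
Qed.

Lemma tiles_and_left_translates_uniq i t s :
  tiles_and_left_translates (t, c) -> i - t \in P c ->
  tiles_and_left_translates (s, c) -> i - s \in P c -> t = s.
Proof.
have labels_differ : x i = c -> x (i + 1) = c -> False.
  by move=> /eqP xi /eqP xi1; move: (x_alternating i); rewrite xi xi1.
move=> [_ [Jt|Jt]] Pit [_ [Js|Js]] Pis.
- exact: tile_uniq Jt Pit Js Pis.
- case: labels_differ; first exact: label_of_tile Jt Pit.
  exact: label_of_left_translate Js Pis.
- case: labels_differ; first exact: label_of_tile Js Pis.
  exact: label_of_left_translate Jt Pit.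
- apply: (addIr 1); apply: (tile_uniq (i := i + 1)) => //;
    by rewrite opprD addrACA subrr addr0.
Qed.

Lemma TP_const_of_alternating : TP P (fun _ => c).
Proof.
exists tiles_and_left_translates; split=> [i|i k].
  have [t [Jt Pit]] := tiles_and_left_translates_cover i.
  exists (t, c); split=> // -[s k] [Js Pis].
  have /= k_c := proj1 Js; subst k.
  by rewrite (tiles_and_left_translates_uniq Jt Pit Js Pis).
split=> [<-|[t [[/= -> _] _]] //].
by have [t [Jt Pit]] := tiles_and_left_translates_cover i; exists t.
Qed.

End ConstantTiling.

Theorem mainTheorem5 (K : nat) (P : 'I_K -> seq int) :
  prototile_collection P ->
  (exists x : int -> 'I_K, TP P x /\ shift (shift x) = x /\ shift x <> x) ->
  exists x y : int -> 'I_K,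
    TP P x /\ TP P y /\ shift x = x /\ shift y = y /\ x <> y.
Proof.
move=> _ [x [[J [tilingJ x_of_J]] [x_period2 x_nonfixed]]].
have x2 i : x (i + 2) = x i by rewrite -[in RHS]x_period2 /shift -addrA.
have x01 : x 0 != x 1.
  apply/eqP=> x10; apply: x_nonfixed; apply: functional_extensionality.
  exact: period2_fixed x2 (esym x10).
have TP_const c : (x 0 == c) != (x 1 == c) -> TP P (fun _ => c).
  move=> alt0.
  exact: TP_const_of_alternating tilingJ x_of_J (period2_alternating x2 alt0).
exists (fun _ => x 0), (fun _ => x 1); do !split.
- by apply: TP_const; rewrite eqxx [x 1 == _]eq_sym (negPf x01).
- by apply: TP_const; rewrite eqxx (negPf x01).
- by move/(congr1 (fun f => f 0)); apply/eqP.
Qed.
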